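(* The function $g_1(y):=y\,\widehat\rho(y)(1-\widehat\omega(y))$ satisfies $g_1(\widehat\zeta(z))=\widehat\rho(\widehat\zeta(z))\,\big(\widehat\zeta(z)-z\widehat\zeta'(z)\big)$ for $z>0$, and $$\widehat v(y)\,g_1'(y)+g_1(y)>0\qquad\text{for all }y\in(0,y_* ).$$
   Context: LP profile: $(\widehat\rho,\widehat\omega)$ real-analytic, even, solving $\widehat\rho'=-\frac{2y\widehat\rho\widehat\omega(\widehat\rho-\widehat\omega)}{1-y^2\widehat\omega^2}$, $\widehat\omega'=\frac{1-3\widehat\omega}{y}+\frac{2y\widehat\omega^2(\widehat\rho-\widehat\omega)}{1-y^2\widehat\omega^2}$, $\widehat\omega(0)=\frac13$, $\widehat\rho(0)>\frac13$, $\widehat\omega\to1$, $y^2\widehat\rho\to\ell\in(0,\infty)$ at infinity, $\widehat\rho'<0<\widehat\omega'$ on $(0,\infty)$; $\widehat v:=y\widehat\omega$ has unique sonic point $y_*\in(2,3)$ with $\widehat v(y_* )=1$. $\widehat\zeta$: increasing solution of $z\widehat\zeta'=\widehat\zeta\,\widehat\omega(\widehat\zeta)$ with $z^{-1/3}\widehat\zeta(z)\to1$ as $z\to0$. *)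

From Stdlib Require Import Reals Lra.
From Coquelicot Require Import Coquelicot.
Open Scope R_scope.

Definition real_analytic (f : R -> R) : Prop :=
  forall x0 : R, exists (a : nat -> R) (r : R), 0 < r /\
    forall y, Rabs (y - x0) < r -> is_pseries a (y - x0) (f y).

(* The ODEs are required wherever their right-hand sides are defined
   (y <> 0 and 1 - y^2 omega^2 <> 0); the functions are analytic, hence
   differentiable everywhere. *)
Definition LP_profile (rho omega : R -> R) (ystar ell : R) : Prop :=
  real_analytic rho /\ real_analytic omega /\
  (forall y, rho (- y) = rho y) /\ (forall y, omega (- y) = omega y) /\
  (forall y, 1 - y ^ 2 * omega y ^ 2 <> 0 ->
     is_derive rho y
       (- (2 * y * rho y * omega y * (rho y - omega y)) / (1 - y ^ 2 * omega y ^ 2))) /\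
  (forall y, y <> 0 -> 1 - y ^ 2 * omega y ^ 2 <> 0 ->
     is_derive omega y
       ((1 - 3 * omega y) / y
        + 2 * y * omega y ^ 2 * (rho y - omega y) / (1 - y ^ 2 * omega y ^ 2))) /\
  omega 0 = 1 / 3 /\ rho 0 > 1 / 3 /\
  is_lim omega p_infty 1 /\
  0 < ell /\ is_lim (fun y => y ^ 2 * rho y) p_infty ell /\
  (forall y, 0 < y -> Derive rho y < 0 /\ 0 < Derive omega y) /\
  (* vhat := y * omega y has a unique sonic point ystar in (2,3) *)
  2 < ystar < 3 /\ ystar * omega ystar = 1 /\
  (forall y, 0 < y -> y * omega y = 1 -> y = ystar).

Definition zeta_hat (omega zeta : R -> R) : Prop :=
  (forall z1 z2, 0 < z1 -> z1 < z2 -> zeta z1 < zeta z2) /\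
  (forall z, 0 < z -> ex_derive zeta z /\
     z * Derive zeta z = zeta z * omega (zeta z)) /\
  filterlim (fun z => zeta z / Rpower z (1 / 3)) (at_right 0) (locally 1).

Definition g1 (rho omega : R -> R) (y : R) : R := y * rho y * (1 - omega y).

From Stdlib Require Import Reals Lra Psatz.
From Coquelicot Require Import Coquelicot.
Open Scope R_scope.

(* Write [s] for the sonic point, [v = y omega], [D = 1 - v^2] and [Q = v g1' + g1].
   Off [s] the ODEs give [Q D = - y rho H] with
   [H = 2 y^2 omega^2 (rho - omega) - (1 - omega + 2 omega^2) D], so on [(0, s)], where
   [D > 0], [Q > 0] is equivalent to [H < 0].  Regularity of the analytic profile across [s]
   forces [rho = omega = 1/s], [rho' = -1/s^2] and [omega' = (s - 2)/s^2] there, whence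
   [Q s = ((s - 1)^2 + 1)/s^2 > 0] and [H < 0] just left of [s].  At a zero of [H] in [(0, s)]
   the ODEs force [H' > 0], so [H] cannot be nonnegative anywhere to the left either.  The
   identity for [g1 o zeta] is the [zeta] equation [z zeta' = zeta omega(zeta)]. *)

Lemma ex_pseries_lt_CV_radius (a : nat -> R) (r : R) :
  (forall h, Rabs h < r -> ex_pseries a h) ->
  forall h, Rabs h < r -> Rbar_lt (Rabs h) (CV_radius a).
Proof.
  intros Ha h Hh.
  destruct (Rbar_lt_dec (Rabs h) (CV_radius a)) as [Hlt | Hge]; [exact Hlt |].
  exfalso.
  set (t := (Rabs h + r) / 2).
  assert (Ht : Rabs t = t) by (apply Rabs_pos_eq; unfold t; pose proof (Rabs_pos h); lra).
  apply (CV_disk_outside a t).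
  - rewrite Ht. apply Rbar_not_lt_le in Hge.
    apply Rbar_le_lt_trans with (Rabs h); [exact Hge |]. simpl. unfold t; lra.
  - assert (Hconv : ex_series (fun k => scal (pow_n t k) (a k))).
    { apply Ha. rewrite Ht. unfold t. lra. }
    apply ex_series_lim_0 in Hconv.
    eapply is_lim_seq_ext; [| exact Hconv].
    intros n. rewrite pow_n_pow. unfold scal; simpl; unfold mult; simpl. apply Rmult_comm.
Qed.

Lemma real_analytic_expansion (f : R -> R) (x0 : R) : real_analytic f ->
  exists (a : nat -> R) (r : R), 0 < r /\ forall y, Rabs (y - x0) < r ->
    Rbar_lt (Rabs (y - x0)) (CV_radius a) /\
    is_derive f y (PSeries (PS_derive a) (y - x0)).
Proof.
  intros Hf. destruct (Hf x0) as (a & r & Hr & Hser).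
  exists a, r. split; [exact Hr |]. intros y Hy.
  assert (Hrad : forall h, Rabs h < r -> Rbar_lt (Rabs h) (CV_radius a)).
  { apply ex_pseries_lt_CV_radius. intros h Hh. exists (f (h + x0)).
    specialize (Hser (h + x0)). replace (h + x0 - x0) with h in Hser by ring.
    now apply Hser. }
  split; [now apply Hrad |].
  apply is_derive_ext_loc with (f := fun t => PSeries a (t - x0)).
  - assert (Hd : 0 < r - Rabs (y - x0)) by lra.
    exists (mkposreal _ Hd). intros t Ht. simpl in Ht.
    change (Rabs (t - y) < r - Rabs (y - x0)) in Ht.
    apply is_pseries_unique, Hser.
    pose proof (Rabs_triang (t - y) (y - x0)) as Htri.
    replace (t - y + (y - x0)) with (t - x0) in Htri by ring. lra.
  - replace (PSeries (PS_derive a) (y - x0)) with (1 * PSeries (PS_derive a) (y - x0)) by ring.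
    apply (is_derive_comp (PSeries a) (fun t => t - x0)).
    + now apply is_derive_PSeries, Hrad.
    + auto_derive; [exact I | ring].
Qed.

Lemma real_analytic_ex_derive (f : R -> R) (x : R) : real_analytic f -> ex_derive f x.
Proof.
  intros Hf. destruct (real_analytic_expansion f x Hf) as (a & r & Hr & Hd).
  eexists. apply Hd. rewrite Rminus_eq_0, Rabs_R0. exact Hr.
Qed.

Lemma real_analytic_Derive (f : R -> R) : real_analytic f -> real_analytic (Derive f).
Proof.
  intros Hf x0. destruct (real_analytic_expansion f x0 Hf) as (a & r & Hr & Hd).
  exists (PS_derive a), r. split; [exact Hr |]. intros y Hy.
  destruct (Hd y Hy) as [Hrad Hder].
  rewrite (is_derive_unique _ _ _ Hder).
  now apply PSeries_correct, ex_pseries_derive.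
Qed.

Lemma Derive_pos_increasing (f : R -> R) (a : R) :
  (forall x, ex_derive f x) -> (forall x, a < x -> 0 < Derive f x) ->
  forall x y, a <= x -> x < y -> f x < f y.
Proof.
  intros Hd Hpos x y Hx Hxy.
  destruct (MVT_cor2 f (Derive f) x y Hxy) as (c & Hc & Hcxy).
  - intros c _. now apply is_derive_Reals, Derive_correct.
  - assert (0 < Derive f c) by (apply Hpos; lra). nra.
Qed.

Lemma increasing_lt_lim (f : R -> R) (a l : R) :
  (forall x y, a <= x -> x < y -> f x < f y) -> is_lim f p_infty l ->
  forall x, a <= x -> f x < l.
Proof.
  intros Hinc Hlim x Hx.
  apply Rnot_le_lt. intros Hle.
  assert (Hx1 : f x < f (x + 1)) by (apply Hinc; lra).
  apply is_lim_spec in Hlim.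
  assert (Heps : 0 < f (x + 1) - l) by lra.
  destruct (Hlim (mkposreal _ Heps)) as [M HM]. simpl in HM.
  set (t := Rmax M (x + 1) + 1).
  assert (HMt : M < t) by (unfold t; pose proof (Rmax_l M (x + 1)); lra).
  assert (Hxt : x + 1 < t) by (unfold t; pose proof (Rmax_r M (x + 1)); lra).
  specialize (HM t HMt). apply Rabs_def2 in HM.
  assert (f (x + 1) < f t) by (apply Hinc; lra). lra.
Qed.

Lemma is_derive_pos_at_right (f : R -> R) (x l : R) :
  is_derive f x l -> 0 < l -> at_right x (fun t => f x < f t).
Proof.
  intros Hd Hl. apply is_derive_Reals in Hd.
  assert (Hl2 : 0 < l / 2) by lra.
  destruct (Hd _ Hl2) as [d Hdelta].
  exists d. intros t Ht Hxt. change R in t. change (Rabs (t - x) < d) in Ht.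
  specialize (Hdelta (t - x) ltac:(lra) Ht).
  replace (x + (t - x)) with t in Hdelta by ring.
  apply Rabs_def2 in Hdelta.
  assert (Hq : 0 < (f t - f x) / (t - x)) by lra.
  assert (f t - f x = (f t - f x) / (t - x) * (t - x)) by (field; lra).
  nra.
Qed.

Lemma continuous_lt_locally (f : R -> R) (x c : R) :
  continuous f x -> c < f x -> locally x (fun t => c < f t).
Proof. intros Hc Hlt. exact (Hc _ (open_gt c _ Hlt)). Qed.

Lemma continuous_gt_locally (f : R -> R) (x c : R) :
  continuous f x -> f x < c -> locally x (fun t => f t < c).
Proof. intros Hc Hlt. exact (Hc _ (open_lt c _ Hlt)). Qed.

(* Look at the last point of [[a, b]] where [f >= 0]. *)
Lemma neg_of_upward_zeros (f df : R -> R) (a b : R) :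
  a <= b -> (forall x, a <= x <= b -> is_derive f x (df x)) ->
  (forall x, a <= x < b -> f x = 0 -> 0 < df x) ->
  f b < 0 -> f a < 0.
Proof.
  intros Hab Hd Hup Hb. apply Rnot_le_lt. intros Ha.
  set (S x := a <= x <= b /\ 0 <= f x).
  destruct (completeness S) as (m & Hub & Hlub).
  - exists b. intros x Hx. apply Hx.
  - exists a. unfold S. lra.
  assert (Ham : a <= m) by (apply Hub; unfold S; lra).
  assert (Hmb : m <= b) by (apply Hlub; intros x Hx; apply Hx).
  assert (Hcont : continuous f m).
  { apply (@ex_derive_continuous R_AbsRing R_NormedModule). eexists. apply Hd. lra. }
  assert (Hfm : 0 <= f m).
  { apply Rnot_lt_le. intros Hneg.
    destruct (continuous_gt_locally f m 0 Hcont Hneg) as [e He].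
    assert (Hbound : is_upper_bound S (m - e)).
    { intros x [Hx Hfx]. apply Rnot_lt_le. intros Hlt.
      assert (Hxm : x <= m) by (apply Hub; split; assumption).
      assert (f x < 0); [| lra].
      apply He. change (Rabs (x - m) < e). rewrite Rabs_left1; lra. }
    pose proof (Hlub _ Hbound). destruct e as [e He0]; simpl in *. lra. }
  assert (Hmb' : m < b) by (destruct (Rle_lt_or_eq_dec m b Hmb) as [| ->]; lra).
  assert (Hright : at_right m (fun t => 0 <= f t)).
  { destruct (Rle_lt_or_eq_dec 0 (f m) Hfm) as [Hpos | Hzero].
    - apply filter_le_within.
      eapply filter_imp; [| apply (continuous_lt_locally f m 0 Hcont Hpos)]. intros t; lra.
    - eapply filter_imp; [| apply (is_derive_pos_at_right f m (df m))]; [intros t; lra | |].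
      + apply Hd. lra.
      + apply Hup; lra. }
  assert (Hbefore_b : at_right m (fun t => t < b)).
  { apply filter_le_within, (continuous_gt_locally id m b); [apply continuous_id | exact Hmb']. }
  assert (Hpast : at_right m (fun t => m < t)) by now exists (mkposreal 1 Rlt_0_1).
  destruct (filter_ex _ (filter_and _ _ (filter_and _ _ Hright Hbefore_b) Hpast))
    as (t & (Hft & Htb) & Hmt).
  assert (t <= m) by (apply Hub; unfold S; lra).
  lra.
Qed.

Lemma is_derive_punctured_zero (k : R -> R) (s l : R) :
  locally s (fun y => y <> s -> k y = 0) -> is_derive k s l -> k s = 0 /\ l = 0.
Proof.
  intros Hzero Hd.
  assert (Hks : k s = 0).
  { assert (Hlim : is_lim k s (k s)).
    { eapply filterlim_filter_le_1; [apply filter_le_within |].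
      apply (@ex_derive_continuous R_AbsRing R_NormedModule). now exists l. }
    assert (Hlim0 : is_lim k s 0).
    { apply is_lim_ext_loc with (fun _ => 0); [| apply is_lim_const].
      eapply filter_imp; [| exact Hzero]. intros y Hy. simpl. now rewrite Hy. }
    apply is_lim_unique in Hlim, Hlim0. rewrite Hlim in Hlim0. now injection Hlim0. }
  split; [exact Hks |].
  assert (Hd0 : is_derive k s 0).
  { apply is_derive_ext_loc with (fun _ => 0).
    2: apply (is_derive_const (K := R_AbsRing) (V := R_NormedModule) 0).
    eapply filter_imp; [| exact Hzero]. intros y Hy.
    destruct (Req_dec y s) as [-> | Hys]; [now rewrite Hks | now rewrite Hy]. }
  now rewrite <- (is_derive_unique _ _ _ Hd), (is_derive_unique _ _ _ Hd0).
Qed.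

Lemma sonic_slopes (s a b : R) : 0 < s -> 0 < b ->
  a - b - (1 + s ^ 2 * b) * a = 0 ->
  (1 + s ^ 2 * b) * (s ^ 2 * b - s + 3) + s ^ 2 * (a - b) = 0 ->
  s ^ 2 * a = -1 /\ s ^ 2 * b = s - 2.
Proof.
  intros Hs Hb H1 H2.
  assert (Ha : s ^ 2 * a = -1).
  { assert (Hprod : b * (s ^ 2 * a + 1) = 0) by lra.
    destruct (Rmult_integral _ _ Hprod); lra. }
  split; [exact Ha |].
  assert (Hprod : (1 + s ^ 2 * b) * (s ^ 2 * b - s + 2) = 0) by nra.
  assert (0 < s ^ 2 * b) by (apply Rmult_lt_0_compat; [apply pow_lt |]; lra).
  destruct (Rmult_integral _ _ Hprod); lra.
Qed.

Lemma crossing_poly_pos (t w : R) : 0 <= t <= 1 -> 1 / 3 <= w < 1 ->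
  0 < (1 - t) * ((1 - w) * (3 - 3 * w - 2 * w ^ 2 + 4 * w ^ 3))
      + t * (4 * (1 - w) ^ 2 * (2 * w ^ 2 - 2 * w + 1)).
Proof.
  intros Ht Hw.
  assert (0 <= w * (w - 7 / 10) ^ 2) by (apply Rmult_le_pos; [lra | apply pow2_ge_0]).
  assert (HX : 0 < (1 - w) * (3 - 3 * w - 2 * w ^ 2 + 4 * w ^ 3)) by nra.
  assert (HY : 0 < 4 * (1 - w) ^ 2 * (2 * w ^ 2 - 2 * w + 1)).
  { apply Rmult_lt_0_compat; [| nra]. assert (0 < (1 - w) ^ 2) by (apply pow_lt; lra). lra. }
  destruct (Req_dec t 1) as [-> | Ht1]; [lra |].
  assert (0 < (1 - t) * ((1 - w) * (3 - 3 * w - 2 * w ^ 2 + 4 * w ^ 3)))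
    by (apply Rmult_lt_0_compat; lra).
  assert (0 <= t * (4 * (1 - w) ^ 2 * (2 * w ^ 2 - 2 * w + 1))) by (apply Rmult_le_pos; lra).
  lra.
Qed.

(* Eliminating [r - w], [r'] and [w'] through [H = 0] and the ODEs, [y w H'] becomes the
   convex combination of [crossing_poly_pos] with [t = (y w)^2]. *)
Lemma crossing_deriv_pos (y w r dr dw : R) : 0 < y -> 1 / 3 <= w < 1 ->
  0 < 1 - y ^ 2 * w ^ 2 ->
  dr = - (2 * y * r * w * (r - w)) / (1 - y ^ 2 * w ^ 2) ->
  dw = (1 - 3 * w) / y + 2 * y * w ^ 2 * (r - w) / (1 - y ^ 2 * w ^ 2) ->
  2 * y ^ 2 * w ^ 2 * (r - w) - (1 - w + 2 * w ^ 2) * (1 - y ^ 2 * w ^ 2) = 0 ->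
  0 < 2 * (2 * y * w ^ 2 + y ^ 2 * (2 * w * dw)) * (r - w) + 2 * y ^ 2 * w ^ 2 * (dr - dw)
      - (- dw + 4 * w * dw) * (1 - y ^ 2 * w ^ 2)
      + (1 - w + 2 * w ^ 2) * (2 * y * w ^ 2 + y ^ 2 * (2 * w * dw)).
Proof.
  intros Hy Hw HD Hdr Hdw Hzero.
  set (P := 1 - w + 2 * w ^ 2) in *.
  set (D := 1 - y ^ 2 * w ^ 2) in *.
  assert (Hk : 0 < 2 * y ^ 2 * w ^ 2).
  { assert (0 < y ^ 2) by (apply pow_lt; lra). assert (0 < w ^ 2) by (apply pow_lt; lra). nra. }
  assert (Hrw : r - w = P * D / (2 * y ^ 2 * w ^ 2)).
  { replace (P * D) with (2 * y ^ 2 * w ^ 2 * (r - w)) by lra. field. lra. }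
  assert (Hdr' : dr = - r * P / (y * w)) by (rewrite Hdr, Hrw; field; lra).
  assert (Hdw' : dw = (1 - 3 * w + P) / y) by (rewrite Hdw, Hrw; field; lra).
  replace r with (w + P * D / (2 * y ^ 2 * w ^ 2)) in Hdr' by lra.
  rewrite Hdr', Hdw', Hrw.
  assert (Ht : 0 <= y ^ 2 * w ^ 2 <= 1) by (unfold D in HD; split; nra).
  pose proof (crossing_poly_pos _ w Ht Hw) as Hpos.
  apply Rmult_lt_reg_r with (y * w); [nra |].
  rewrite Rmult_0_l. eapply Rlt_le_trans; [exact Hpos |].
  right. unfold D, P. field. lra.
Qed.

Section LPProfile.

Variables (rho omega : R -> R) (s ell : R).

Local Notation D y := (1 - y ^ 2 * omega y ^ 2).

Hypotheses (rho_an : real_analytic rho) (omega_an : real_analytic omega).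
Hypothesis rho_ode : forall y, D y <> 0 ->
  is_derive rho y (- (2 * y * rho y * omega y * (rho y - omega y)) / D y).
Hypothesis omega_ode : forall y, y <> 0 -> D y <> 0 ->
  is_derive omega y ((1 - 3 * omega y) / y + 2 * y * omega y ^ 2 * (rho y - omega y) / D y).
Hypotheses (omega_0 : omega 0 = 1 / 3) (omega_lim : is_lim omega p_infty 1).
Hypotheses (ell_pos : 0 < ell) (rho_lim : is_lim (fun y => y ^ 2 * rho y) p_infty ell).
Hypothesis Derive_signs : forall y, 0 < y -> Derive rho y < 0 /\ 0 < Derive omega y.
Hypotheses (s_pos : 0 < s) (sonic : s * omega s = 1).
Hypothesis sonic_unique : forall y, 0 < y -> y * omega y = 1 -> y = s.

Local Ltac eta_Derive :=
  change (Derive (fun x => rho x)) with (Derive rho);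
  change (Derive (fun x => omega x)) with (Derive omega).

Let rho_ex_derive (x : R) : ex_derive rho x := real_analytic_ex_derive rho x rho_an.
Let omega_ex_derive (x : R) : ex_derive omega x := real_analytic_ex_derive omega x omega_an.
Let Derive_rho_ex_derive (x : R) : ex_derive (Derive rho) x :=
  real_analytic_ex_derive _ x (real_analytic_Derive rho rho_an).
Let Derive_omega_ex_derive (x : R) : ex_derive (Derive omega) x :=
  real_analytic_ex_derive _ x (real_analytic_Derive omega omega_an).

Lemma omega_increasing x y : 0 <= x -> x < y -> omega x < omega y.
Proof. apply (Derive_pos_increasing omega 0); [exact omega_ex_derive | apply Derive_signs]. Qed.

Lemma omega_ge x : 0 <= x -> 1 / 3 <= omega x.
Proof.
  intros Hx. destruct (Req_dec x 0) as [-> | Hx0]; [lra |].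
  pose proof (omega_increasing 0 x (Rle_refl 0) ltac:(lra)). lra.
Qed.

Lemma omega_lt_1 x : 0 <= x -> omega x < 1.
Proof. apply (increasing_lt_lim omega 0 1); [exact omega_increasing | exact omega_lim]. Qed.

Lemma rho_pos x : 0 < x -> 0 < rho x.
Proof.
  intros Hx.
  assert (Hdecr : forall u v, 0 <= u -> u < v -> - rho u < - rho v).
  { apply (Derive_pos_increasing (fun y => - rho y) 0).
    - intros u. auto_derive. apply rho_ex_derive.
    - intros u Hu. rewrite Derive_opp. pose proof (proj1 (Derive_signs u Hu)). lra. }
  apply is_lim_spec in rho_lim.
  assert (Hell : 0 < ell / 2) by lra.
  destruct (rho_lim (mkposreal _ Hell)) as [M HM]. simpl in HM.
  set (t := Rmax M x + 1).
  assert (HMt : M < t) by (unfold t; pose proof (Rmax_l M x); lra).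
  assert (Hxt : x < t) by (unfold t; pose proof (Rmax_r M x); lra).
  specialize (HM t HMt). apply Rabs_def2 in HM.
  assert (0 < t ^ 2) by (apply pow_lt; lra).
  assert (0 < rho t) by nra.
  pose proof (Hdecr x t ltac:(lra) Hxt). lra.
Qed.

Lemma subsonic x : 0 < x < s -> x * omega x < 1.
Proof.
  intros Hx. apply Rnot_le_lt. intros Hge.
  assert (Hcont : forall t, continuity_pt (fun t => t * omega t - 1) t).
  { intros t. apply continuity_pt_minus; [apply continuity_pt_mult |].
    - apply continuity_pt_id.
    - apply continuity_pt_filterlim, (@ex_derive_continuous R_AbsRing R_NormedModule).
      apply omega_ex_derive.
    - apply continuity_pt_const. intros u v. reflexivity. }
  destruct (Req_dec (x * omega x) 1) as [Heq | Hneq].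
  { pose proof (sonic_unique x ltac:(lra) Heq). lra. }
  destruct (IVT _ 0 x Hcont ltac:(lra) ltac:(simpl; lra) ltac:(simpl; lra)) as (z & Hz & Hvz).
  assert (Hz0 : z <> 0) by (intros ->; simpl in Hvz; lra).
  pose proof (sonic_unique z ltac:(lra) ltac:(lra)). lra.
Qed.

Lemma D_pos x : 0 < x < s -> 0 < D x.
Proof.
  intros Hx. pose proof (subsonic x Hx). pose proof (omega_ge x ltac:(lra)).
  assert (0 < x * omega x) by (apply Rmult_lt_0_compat; lra). nra.
Qed.

Lemma D_neq0 x : 0 < x -> x <> s -> D x <> 0.
Proof.
  intros Hx Hxs HD. apply Hxs, sonic_unique; [exact Hx |].
  pose proof (omega_ge x ltac:(lra)).
  assert (0 < x * omega x) by (apply Rmult_lt_0_compat; lra).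
  assert (Hprod : (x * omega x - 1) * (x * omega x + 1) = - D x) by ring.
  rewrite HD, Ropp_0 in Hprod.
  destruct (Rmult_integral _ _ Hprod); lra.
Qed.

Lemma sonic_factor_neq0 x : 0 < x -> x <> s -> 1 - (x * omega x) ^ 2 <> 0.
Proof. rewrite Rpow_mult_distr. apply D_neq0. Qed.

Lemma omega_sonic : omega s = / s.
Proof. apply Rmult_eq_reg_l with s; [rewrite sonic; field |]; lra. Qed.

Lemma D_sonic : D s = 0.
Proof. rewrite omega_sonic. field. lra. Qed.

Lemma near_sonic (P : R -> Prop) : (forall y, 0 < y -> y <> s -> P y) ->
  locally s (fun y => y <> s -> P y).
Proof.
  intros HP. eapply filter_imp; [| apply (open_gt 0 s s_pos)].
  intros y Hy Hys. exact (HP y Hy Hys).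
Qed.

(* The ODEs degenerate at [s].  Their cleared-denominator forms below vanish off [s],
   hence at [s] together with their derivatives; as [D s = 0], this pins down [rho s],
   [rho' s] and [omega' s]. *)
Let rho_residual y := D y * Derive rho y + 2 * y * rho y * omega y * (rho y - omega y).
Let omega_residual y := D y * (Derive omega y - (1 - 3 * omega y) / y)
                        - 2 * y * omega y ^ 2 * (rho y - omega y).

Lemma rho_residual_zero : locally s (fun y => y <> s -> rho_residual y = 0).
Proof.
  apply near_sonic. intros y Hy Hys. unfold rho_residual.
  rewrite (is_derive_unique _ _ _ (rho_ode y (D_neq0 y Hy Hys))).
  field. now apply sonic_factor_neq0.
Qed.

Lemma omega_residual_zero : locally s (fun y => y <> s -> omega_residual y = 0).
Proof.
  apply near_sonic. intros y Hy Hys. unfold omega_residual.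
  rewrite (is_derive_unique _ _ _ (omega_ode y ltac:(lra) (D_neq0 y Hy Hys))).
  field. split; [lra | now apply sonic_factor_neq0].
Qed.

Lemma rho_sonic : rho s = / s.
Proof.
  assert (Hd : ex_derive rho_residual s).
  { unfold rho_residual. auto_derive. repeat split; auto. }
  destruct (is_derive_punctured_zero _ s _ rho_residual_zero (Derive_correct _ _ Hd)) as [Hs _].
  unfold rho_residual in Hs. rewrite D_sonic, omega_sonic in Hs.
  pose proof (rho_pos s s_pos).
  assert (Hprod : (2 * rho s) * (rho s - / s) = 0) by (rewrite <- Hs; field; lra).
  destruct (Rmult_integral _ _ Hprod); lra.
Qed.

Lemma Derive_rho_sonic_relation (a := Derive rho s) (b := Derive omega s) :
  a - b - (1 + s ^ 2 * b) * a = 0.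
Proof.
  assert (Hd : is_derive rho_residual s (2 / s * (a - b - (1 + s ^ 2 * b) * a))).
  { unfold rho_residual. auto_derive; [repeat split; auto |].
    eta_Derive. fold a b. rewrite rho_sonic, omega_sonic. field. lra. }
  destruct (is_derive_punctured_zero _ s _ rho_residual_zero Hd) as [_ Hzero].
  apply Rmult_integral in Hzero. destruct Hzero as [Hzero | Hzero]; [| exact Hzero].
  assert (0 < 2 / s) by (apply Rdiv_lt_0_compat; lra). lra.
Qed.

Lemma Derive_omega_sonic_relation (a := Derive rho s) (b := Derive omega s) :
  (1 + s ^ 2 * b) * (s ^ 2 * b - s + 3) + s ^ 2 * (a - b) = 0.
Proof.
  assert (Hd : is_derive omega_residual s
      (- (2 / s ^ 3) * ((1 + s ^ 2 * b) * (s ^ 2 * b - s + 3) + s ^ 2 * (a - b)))).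
  { unfold omega_residual. auto_derive; [repeat split; auto; lra |].
    eta_Derive. fold a b. rewrite rho_sonic, omega_sonic. field. lra. }
  destruct (is_derive_punctured_zero _ s _ omega_residual_zero Hd) as [_ Hzero].
  apply Rmult_integral in Hzero. destruct Hzero as [Hzero | Hzero]; [| exact Hzero].
  assert (0 < 2 / s ^ 3) by (apply Rdiv_lt_0_compat; [| apply pow_lt]; lra). lra.
Qed.

Lemma Derive_sonic : s ^ 2 * Derive rho s = -1 /\ s ^ 2 * Derive omega s = s - 2.
Proof.
  apply sonic_slopes; [exact s_pos | apply Derive_signs, s_pos | |].
  - apply Derive_rho_sonic_relation.
  - apply Derive_omega_sonic_relation.
Qed.

Lemma Derive_g1 y : Derive (g1 rho omega) y =
  rho y * (1 - omega y) + y * Derive rho y * (1 - omega y) - y * rho y * Derive omega y.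
Proof.
  apply is_derive_unique. unfold g1. auto_derive; [repeat split; auto |]. eta_Derive. ring.
Qed.

Let combination y := y * omega y * Derive (g1 rho omega) y + g1 rho omega y.

Lemma combination_sonic_pos : 0 < combination s.
Proof.
  destruct Derive_sonic as [Ha Hb].
  assert (Hval : combination s = ((s - 1) ^ 2 + 1) / s ^ 2).
  { unfold combination, g1. rewrite Derive_g1, rho_sonic, omega_sonic.
    replace (Derive rho s) with (-1 / s ^ 2) by (field_simplify_eq; lra).
    replace (Derive omega s) with ((s - 2) / s ^ 2) by (field_simplify_eq; lra).
    field. lra. }
  rewrite Hval. apply Rdiv_lt_0_compat; [nra | apply pow_lt; lra].
Qed.

Lemma combination_continuous : continuous combination s.
Proof.
  apply (continuous_ext (fun y => y * omega y * (rho y * (1 - omega y)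
           + y * Derive rho y * (1 - omega y) - y * rho y * Derive omega y) + g1 rho omega y)).
  - intros y. unfold combination. now rewrite Derive_g1.
  - apply (@ex_derive_continuous R_AbsRing R_NormedModule). unfold g1.
    auto_derive. repeat split; auto.
Qed.

Let crossing y := 2 * y ^ 2 * omega y ^ 2 * (rho y - omega y)
                  - (1 - omega y + 2 * omega y ^ 2) * D y.

Lemma combination_crossing y : 0 < y -> y <> s ->
  combination y * D y = - (y * rho y * crossing y).
Proof.
  intros Hy Hys. unfold combination, crossing, g1. rewrite Derive_g1.
  rewrite (is_derive_unique _ _ _ (rho_ode y (D_neq0 y Hy Hys))).
  rewrite (is_derive_unique _ _ _ (omega_ode y ltac:(lra) (D_neq0 y Hy Hys))).
  field. split; [now apply sonic_factor_neq0 | lra].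
Qed.

Lemma combination_pos_iff y : 0 < y < s -> 0 < combination y <-> crossing y < 0.
Proof.
  intros Hy. pose proof (D_pos y Hy) as HD.
  assert (Hyr : 0 < y * rho y) by (apply Rmult_lt_0_compat; [| apply rho_pos]; lra).
  pose proof (combination_crossing y ltac:(lra) ltac:(lra)) as Heq.
  split; intros Hsign.
  - assert (0 < combination y * D y) by (apply Rmult_lt_0_compat; lra).
    destruct (Rlt_or_le (crossing y) 0) as [Hneg | Hnneg]; [exact Hneg |].
    assert (0 <= y * rho y * crossing y) by (apply Rmult_le_pos; lra). lra.
  - assert (Hprod : y * rho y * crossing y < 0) by nra.
    destruct (Rlt_or_le 0 (combination y)) as [Hpos | Hnpos]; [exact Hpos |].
    assert (combination y * D y <= 0) by (apply Rmult_le_0_r; lra). lra.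
Qed.

Let crossing_deriv y :=
  2 * (2 * y * omega y ^ 2 + y ^ 2 * (2 * omega y * Derive omega y)) * (rho y - omega y)
  + 2 * y ^ 2 * omega y ^ 2 * (Derive rho y - Derive omega y)
  - (- Derive omega y + 4 * omega y * Derive omega y) * D y
  + (1 - omega y + 2 * omega y ^ 2)
    * (2 * y * omega y ^ 2 + y ^ 2 * (2 * omega y * Derive omega y)).

Lemma is_derive_crossing y : is_derive crossing y (crossing_deriv y).
Proof.
  unfold crossing, crossing_deriv. auto_derive; [repeat split; auto |]. eta_Derive. ring.
Qed.

Lemma crossing_upward y : 0 < y < s -> crossing y = 0 -> 0 < crossing_deriv y.
Proof.
  intros Hy Hzero. apply (crossing_deriv_pos y (omega y) (rho y)).
  - lra.
  - split; [apply omega_ge | apply omega_lt_1]; lra.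
  - now apply D_pos.
  - apply is_derive_unique, rho_ode, D_neq0; lra.
  - apply is_derive_unique, omega_ode; [lra | apply D_neq0; lra].
  - exact Hzero.
Qed.

Lemma combination_pos y : 0 < y < s -> 0 < combination y.
Proof.
  intros Hy.
  destruct (continuous_lt_locally _ _ _ combination_continuous combination_sonic_pos)
    as [[d Hd0] Hnear]; simpl in Hnear.
  set (b := (Rmax y (s - d) + s) / 2).
  assert (Hmax : Rmax y (s - d) < s) by (apply Rmax_lub_lt; lra).
  assert (Hb : y < b < s) by (unfold b; pose proof (Rmax_l y (s - d)); lra).
  assert (Hcomb_b : 0 < combination b).
  { apply Hnear. change (Rabs (b - s) < d). rewrite Rabs_left by lra.
    unfold b. pose proof (Rmax_r y (s - d)). lra. }
  apply combination_pos_iff; [exact Hy |].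
  apply (neg_of_upward_zeros crossing crossing_deriv y b); [lra | | | ].
  - intros x _. apply is_derive_crossing.
  - intros x Hx. apply crossing_upward. lra.
  - apply combination_pos_iff; [lra | exact Hcomb_b].
Qed.

End LPProfile.

Theorem lemmaL (rho omega zeta : R -> R) (ystar ell : R) :
  LP_profile rho omega ystar ell ->
  zeta_hat omega zeta ->
  (forall z, 0 < z ->
     g1 rho omega (zeta z) = rho (zeta z) * (zeta z - z * Derive zeta z)) /\
  (forall y, 0 < y < ystar ->
     (y * omega y) * Derive (g1 rho omega) y + g1 rho omega y > 0).
Proof.
  intros (rho_an & omega_an & _ & _ & rho_ode & omega_ode & omega_0 & _ & omega_lim
          & ell_pos & rho_lim & Derive_signs & ystar_bounds & sonic & sonic_unique)
         (_ & zeta_ode & _).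
  split.
  - intros z Hz. destruct (zeta_ode z Hz) as [_ Hzeta].
    unfold g1. rewrite Hzeta. ring.
  - intros y Hy. apply Rlt_gt.
    apply (combination_pos rho omega ystar ell); auto. lra.
Qed.
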